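(* For integers $n\ge 2$ and $0\le i\le n$, let $f_{n,i}$ be the number of paths in $\mathrm{Bal}^*(n,i)$ containing at least one $D$ step. Then $$f_{n,i}=\binom{2n-2}{n-i-1}-\binom{2n-2}{n-i-2}-\binom{n-2}{n-i-1}.$$
   Context: Binomial coefficients $\binom{a}{c}$ with $a\ge 0$ are $0$ if $c<0$ or $c>a$. $\mathrm{Bal}^*(n,i)$ is the set of lattice paths from $(0,0)$ to $(n,i)$ with steps $U=(1,1)$, $D=(1,-1)$ and horizontal steps $(1,0)$ colored umber or denim, never going below the $x$-axis, such that no umber step occurs at height $0$ and no denim step occurs before the first $D$ step. *)

From HB Require Import structures.
From mathcomp Require Import all_boot all_order all_algebra.
Set Implicit Arguments. Unset Strict Implicit. Unset Printing Implicit Defensive.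
Import GRing.Theory Num.Theory.

(* Steps of the lattice paths: U = (1,1), D = (1,-1),
   Hu = horizontal step (1,0) coloured umber, Hd = horizontal coloured denim. *)
Inductive step := U | D | Hu | Hd.

Definition step_to_ord (s : step) : 'I_4 :=
  match s with U => inord 0 | D => inord 1 | Hu => inord 2 | Hd => inord 3 end.
Definition ord_to_step (o : 'I_4) : step :=
  match val o with 0 => U | 1 => D | 2 => Hu | _ => Hd end.
Lemma step_to_ordK : cancel step_to_ord ord_to_step.
Proof. by case; rewrite /ord_to_step /= inordK. Qed.
HB.instance Definition _ := Finite.copy step (can_type step_to_ordK).

Fixpoint balstar_from (h : nat) (seenD : bool) (s : seq step) (i : nat) : bool :=
  match s with
  | [::] => h == i
  | U :: s' => balstar_from h.+1 seenD s' i
  | D :: s' => (0 < h) && balstar_from h.-1 true s' i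
  | Hu :: s' => (0 < h) && balstar_from h seenD s' i
  | Hd :: s' => seenD && balstar_from h seenD s' i
  end.

Definition in_BalStar (n i : nat) (p : n.-tuple step) : bool :=
  balstar_from 0 false p i.

Definition f_count (n i : nat) : nat :=
  #|[set p : n.-tuple step | @in_BalStar n i p && (D \in (p : seq step))]|.

Definition binz (a : nat) (c : int) : int :=
  match c with Posz k => ('C(a, k))%:Z | Negz _ => 0 end.

From mathcomp Require Import all_boot all_order all_algebra.
From mathcomp Require Import zify ring.
Import GRing.Theory Num.Theory.

(** Count the paths of length [m] from height [h] to height [i] in three
    classes: [withD] and [noD] start before any D step has occurred and do or
    do not contain one, [afterD] start after a D step, so denim steps are
    always allowed.  Doubling every step into two Dyck steps (U -> UU,
    D -> DD, umber -> DU, denim -> UD) and the reflection principle give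
    [afterD m h i = C(2m, m+i-h) - C(2m, m+i+h+1)]; paths without D use only
    U and umber steps, so [noD m (h+1) i = C(m, i-h-1)].  An induction on [m]
    shows [afterD m h i = withD m (h+1) i + [h > 0] withD m h i + noD m h i].
    A path of [Bal^*(n,i)] starts with U, so
    [f_{n,i} = withD (n-1) 1 i = afterD (n-1) 0 i - noD (n-2) 1 i]. *)

Lemma big_tupleS (R : Type) (idx : R) (op : Monoid.com_law idx) (T : finType)
    (m : nat) (F : seq T -> R) :
  \big[op/idx]_(t : m.+1.-tuple T) F t
    = \big[op/idx]_(x : T) \big[op/idx]_(t : m.-tuple T) F (x :: t).
Proof.
rewrite pair_big (reindex (fun p : T * m.-tuple T => [tuple of p.1 :: p.2])) //=.
exists (fun t : m.+1.-tuple T => (thead t, [tuple of behead t])).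
  by move=> [x t] _; congr pair; apply: val_inj.
by move=> t _; rewrite [in RHS](tuple_eta t).
Qed.

Lemma sum_step (F : step -> nat) : \sum_(x : step) F x = F U + F D + F Hu + F Hd.
Proof.
rewrite (reindex ord_to_step) /=; first by rewrite !big_ord_recl big_ord0 addn0 !addnA.
exists step_to_ord => [o _|x _]; last exact: step_to_ordK.
by apply: val_inj; case: o => [[|[|[|[|k]]]] ok] //=; rewrite inordK.
Qed.

Definition npaths (m : nat) (P : pred (seq step)) : nat :=
  \sum_(t : m.-tuple step) P t.

Lemma npaths0 (P : pred (seq step)) : npaths 0 P = P [::].
Proof.
by rewrite /npaths (big_pred1 [tuple]) // => t; rewrite /= (tuple0 t); apply/esym/eqP.
Qed.

Lemma npathsS (m : nat) (P : pred (seq step)) :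
  npaths m.+1 P = npaths m (fun s => P (U :: s)) + npaths m (fun s => P (D :: s))
                + npaths m (fun s => P (Hu :: s)) + npaths m (fun s => P (Hd :: s)).
Proof. by rewrite /npaths (@big_tupleS _ 0 addn _ m (fun s => P s : nat)) sum_step. Qed.

Lemma eq_npaths (m : nat) (P Q : pred (seq step)) : P =1 Q -> npaths m P = npaths m Q.
Proof. by move=> eqPQ; apply: eq_bigr => t _; rewrite eqPQ. Qed.

Lemma npaths_pred0 (m : nat) : npaths m (fun _ => false) = 0.
Proof. exact: big1. Qed.

Definition withD (m h i : nat) : nat :=
  npaths m (fun s => balstar_from h false s i && (D \in s)).
Definition noD (m h i : nat) : nat :=
  npaths m (fun s => balstar_from h false s i && (D \notin s)).
Definition afterD (m h i : nat) : nat :=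
  npaths m (fun s => balstar_from h true s i).

Lemma withD0 (h i : nat) : withD 0 h i = 0.
Proof. by rewrite /withD npaths0 andbF. Qed.

Lemma noD0 (h i : nat) : noD 0 h i = (h == i).
Proof. by rewrite /noD npaths0 andbT. Qed.

Lemma afterD0 (h i : nat) : afterD 0 h i = (h == i).
Proof. by rewrite /afterD npaths0. Qed.

Lemma in_cons_D (x : step) (s : seq step) :
  (D \in x :: s) = if x is D then true else D \in s.
Proof. by rewrite in_cons; case: x; rewrite ?eqxx //; case: eqP. Qed.

Lemma withDS0 (m i : nat) : withD m.+1 0 i = withD m 1 i.
Proof.
rewrite /withD npathsS /= !npaths_pred0 !addn0.
by apply: eq_npaths => s; rewrite in_cons_D.
Qed.

Lemma withDSS (m h i : nat) :
  withD m.+1 h.+1 i = withD m h.+2 i + afterD m h i + withD m h.+1 i.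
Proof.
rewrite /withD /afterD npathsS /= !npaths_pred0 addn0.
by congr (_ + _ + _); apply: eq_npaths => s; rewrite in_cons_D /= ?andbT.
Qed.

Lemma noDS0 (m i : nat) : noD m.+1 0 i = noD m 1 i.
Proof.
rewrite /noD npathsS /= !npaths_pred0 !addn0.
by apply: eq_npaths => s; rewrite in_cons_D.
Qed.

Lemma noDSS (m h i : nat) : noD m.+1 h.+1 i = noD m h.+2 i + noD m h.+1 i.
Proof.
rewrite /noD npathsS /=.
rewrite [npaths _ (fun s => _ && (D \notin D :: s))](@eq_npaths m _ (fun _ => false)).
  rewrite !npaths_pred0 !addn0.
  by congr (_ + _); apply: eq_npaths => s; rewrite in_cons_D.
by move=> s; rewrite in_cons_D andbF.
Qed.

Lemma afterDS0 (m i : nat) : afterD m.+1 0 i = afterD m 1 i + afterD m 0 i.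
Proof. by rewrite /afterD npathsS /= !npaths_pred0 !addn0. Qed.

Lemma afterDSS (m h i : nat) :
  afterD m.+1 h.+1 i = afterD m h.+2 i + afterD m h i + afterD m h.+1 i + afterD m h.+1 i.
Proof. by rewrite /afterD npathsS. Qed.

Lemma afterD_decomp (m h i : nat) :
  withD m h.+1 i + (if h is 0 then 0 else withD m h i) + noD m h i = afterD m h i.
Proof.
elim: m h => [|m IHm] h; first by rewrite !withD0 noD0 afterD0; case: h.
case: h => [|h].
  by have := IHm 1; rewrite withDSS noDS0 afterDS0 /=; lia.
have := IHm h.+2; have := IHm h.+1; rewrite !withDSS noDSS afterDSS /=.
by case: h => [|h] /=; lia.
Qed.

Local Open Scope ring_scope.

Lemma binz_lt0 (a : nat) (c : int) : c < 0 -> binz a c = 0.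
Proof. by case: c. Qed.

Lemma binz_gt (a : nat) (c : int) : a%:Z < c -> binz a c = 0.
Proof. by case: c => //= k; rewrite ltz_nat => /bin_small->. Qed.

Lemma binz0 (c : int) : binz 0 c = (c == 0)%:Z.
Proof. by case: c => [[|k]|k]. Qed.

Lemma binzS (a : nat) (c : int) : binz a.+1 c = binz a c + binz a (c - 1).
Proof.
case: c => [[|k]|k]; first by rewrite /= !bin0.
  by have -> : k.+1%:Z - 1 = k%:Z by lia.
by rewrite !binz_lt0 ?addr0 //; lia.
Qed.

Lemma binzSS (a : nat) (c : int) :
  binz a.+2 c = binz a c + binz a (c - 1) *+ 2 + binz a (c - 2).
Proof.
have -> : c - 2 = c - 1 - 1 by lia.
by rewrite !binzS mulr2n; ring.
Qed.

Lemma binz_sym (a : nat) (c c' : int) : c + c' = a%:Z -> binz a c = binz a c'.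
Proof.
case: c => [k|k] sum_a.
  have [le_ka|lt_ak] := leqP k a.
    have -> : c' = (a - k)%N%:Z by lia.
    by rewrite /= bin_sub.
  by rewrite (@binz_lt0 a c') /= ?bin_small //; lia.
by rewrite (@binz_gt a c') //; lia.
Qed.

Definition ballot (m h i : nat) : int :=
  binz (2 * m) (m%:Z + i%:Z - h%:Z) - binz (2 * m) (m%:Z + i%:Z + h%:Z + 1).

Lemma ballot0 (h i : nat) : ballot 0 h i = (h == i)%:Z.
Proof. by rewrite /ballot !binz0; do 3 case: eqP; lia. Qed.

Lemma ballotS0 (m i : nat) : ballot m.+1 0 i = ballot m 1 i + ballot m 0 i.
Proof.
rewrite /ballot (_ : (2 * m.+1 = (2 * m).+2)%N) ?binzSS ?subr0 ?addr0; last lia.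
have -> : m%:Z + i%:Z - 1%:Z = m.+1%:Z + i%:Z - 2 by lia.
have -> : m%:Z + i%:Z + 1%:Z + 1 = m.+1%:Z + i%:Z + 1 by lia.
have -> : m%:Z + i%:Z + 1 = m.+1%:Z + i%:Z by lia.
have -> : m%:Z + i%:Z = m.+1%:Z + i%:Z - 1 by lia.
have -> : m.+1%:Z + i%:Z + 1 - 1 = m.+1%:Z + i%:Z by lia.
have -> : m.+1%:Z + i%:Z + 1 - 2 = m.+1%:Z + i%:Z - 1 by lia.
by rewrite mulr2n; ring.
Qed.

Lemma ballotSS (m h i : nat) :
  ballot m.+1 h.+1 i = ballot m h.+2 i + ballot m h i + ballot m h.+1 i + ballot m h.+1 i.
Proof.
rewrite /ballot (_ : (2 * m.+1 = (2 * m).+2)%N) ?binzSS; last lia.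
have -> : m%:Z + i%:Z - h.+2%:Z = m.+1%:Z + i%:Z - h.+1%:Z - 2 by lia.
have -> : m%:Z + i%:Z + h.+2%:Z + 1 = m.+1%:Z + i%:Z + h.+1%:Z + 1 by lia.
have -> : m%:Z + i%:Z - h%:Z = m.+1%:Z + i%:Z - h.+1%:Z by lia.
have -> : m%:Z + i%:Z + h%:Z + 1 = m.+1%:Z + i%:Z + h.+1%:Z + 1 - 2 by lia.
have -> : m%:Z + i%:Z - h.+1%:Z = m.+1%:Z + i%:Z - h.+1%:Z - 1 by lia.
have -> : m%:Z + i%:Z + h.+1%:Z + 1 = m.+1%:Z + i%:Z + h.+1%:Z + 1 - 1 by lia.
by rewrite mulr2n; ring.
Qed.

Lemma afterDE (m h i : nat) : (afterD m h i)%:Z = ballot m h i.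
Proof.
elim: m h => [|m IHm] h; first by rewrite afterD0 ballot0.
case: h => [|h]; first by rewrite afterDS0 ballotS0 PoszD !IHm.
by rewrite afterDSS ballotSS !PoszD !IHm.
Qed.

Lemma noDE (m h i : nat) : (noD m h.+1 i)%:Z = binz m (i%:Z - h.+1%:Z).
Proof.
elim: m h => [|m IHm] h; first by rewrite noD0 binz0; do 2 case: eqP; lia.
rewrite noDSS PoszD !IHm binzS addrC.
by have -> : i%:Z - h.+1%:Z - 1 = i%:Z - h.+2%:Z by lia.
Qed.

Lemma f_count_withD (n i : nat) : f_count n i = withD n 0 i.
Proof.
rewrite /f_count /withD /npaths -sum1_card big_mkcond /=.
by apply: eq_bigr => t _; rewrite inE /in_BalStar; case: (_ && _).
Qed.

Theorem lemma15 (n i : nat) (hn : (2 <= n)%N) (hi : (i <= n)%N) :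
  (f_count n i)%:Z =
    binz (2 * n - 2) (n%:Z - i%:Z - 1) - binz (2 * n - 2) (n%:Z - i%:Z - 2)
    - binz (n - 2) (n%:Z - i%:Z - 1).
Proof.
(* The identity holds for every [i]: for [i > n] both sides vanish. *)
case: n hn hi => [|[|m]] // _ _.
have -> : (2 * m.+2 - 2 = 2 * m.+1)%N by lia.
have -> : (m.+2 - 2 = m)%N by lia.
have decomp := afterD_decomp m.+1 0 i; rewrite /= addn0 noDS0 in decomp.
rewrite f_count_withD withDS0.
have -> : (withD m.+1 1 i)%:Z = (afterD m.+1 0 i)%:Z - (noD m 1 i)%:Z by lia.
rewrite afterDE noDE /ballot.
by congr (_ - _ - _); apply: binz_sym; lia.
Qed.
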